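(* Under the hypotheses of Theorem 3, Theorem 4, or Theorem 5 below, the point $(\theta^*,\theta^* )$ is uniformly globally exponentially stable for the respective system, i.e., there exist $c,\alpha>0$ with $|x(t)-(\theta^*,\theta^* )|\le c|x_\circ-(\theta^*,\theta^* )|e^{-\alpha(t-t_\circ)}$ for all solutions and all $t\ge t_\circ$. The three settings are: with $\theta^*\in\mathbb{R}^n$, $\phi:\mathbb{R}_{\ge0}\to\mathbb{R}^n$ piecewise continuous and bounded, $y^*=\phi^T\theta^*$, samples $t_1,\dots,t_N$ with $[\phi(t_1),\dots,\phi(t_N)]$ of rank $n$, $\mathcal{N}_t=1+\mu\phi^T\phi$, $B(\theta,\mu)=\sum_k\frac{\phi(t_k)}{1+\mu|\phi(t_k)|^2}(\phi^T(t_k)\theta-y^*(t_k))$: (i) $\dot\theta=-\beta(\theta-\vartheta)\mathcal{N}_t$, $\dot\vartheta=-\gamma(\phi(\phi^T\theta-y^* )+\mathcal{N}_tB(\theta,\mu))$ with $\beta,\gamma,\mu>0$, $\beta\ge2\gamma/\mu$; (ii) $\dot\theta=-\beta(\theta-\vartheta)$, $\dot\vartheta=-\gamma(\mathcal{N}_t^{-1}\phi(\phi^T\theta-y^* )+B(\theta,\mu))$ with $\beta,\gamma,\mu>0$, $\beta\ge2\gamma/\mu$; (iii) $\dot\theta=-\beta(\theta-\vartheta)$, $\dot\vartheta=-\gamma B(\theta,\mu)$ with $\beta,\gamma>0$, $\mu\ge0$.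
   Context: $x=(\theta,\vartheta)\in\mathbb{R}^{2n}$, $|\cdot|$ the Euclidean norm. *)

From HB Require Import structures.
From mathcomp Require Import all_boot all_order all_algebra.
From mathcomp Require Import all_classical all_reals all_analysis.
Set Implicit Arguments. Unset Strict Implicit. Unset Printing Implicit Defensive.
Import Order.TTheory GRing.Theory Num.Theory.
Import numFieldNormedType.Exports.
Local Open Scope classical_set_scope.
Local Open Scope ring_scope.

Section Defs.
Variables (R : realType) (n : nat).

Definition enorm (v : 'cV[R]_n) : R := Num.sqrt (\sum_(i < n) (v i 0) ^+ 2).

(* Euclidean norm of x = (a, b) in R^(2n). *)
Definition enorm2 (a b : 'cV[R]_n) : R :=
  Num.sqrt (\sum_(i < n) (a i 0) ^+ 2 + \sum_(i < n) (b i 0) ^+ 2).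

Definition dotv (u v : 'cV[R]_n) : R := (u^T *m v) 0 0.

(* phi : R_{>=0} -> R^n (values at t < 0 are irrelevant) is piecewise
   continuous: there is a locally finite set of break points outside of which
   phi is continuous, and one-sided limits exist everywhere on R_{>=0}. *)
Definition piecewise_continuous (phi : R -> 'cV[R]_n) : Prop :=
  exists D : set R,
    (forall a b : R, finite_set (D `&` `[a, b])) /\
    (forall t : R, 0 < t -> ~ D t -> {for t, continuous phi}) /\
    (~ D 0 -> phi x @[x --> 0^'+] --> phi 0) /\
    (forall t : R, 0 <= t -> exists l : 'cV[R]_n, phi x @[x --> t^'+] --> l) /\
    (forall t : R, 0 < t -> exists l : 'cV[R]_n, phi x @[x --> t^'-] --> l).

Definition bounded_on_nonneg (phi : R -> 'cV[R]_n) : Prop :=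
  exists M : R, forall t : R, 0 <= t -> enorm (phi t) <= M.

(* A (global, forward) solution from initial time t0 of
   thetadot = Ft t theta vartheta, varthetadot = Fv t theta vartheta:
   continuous on [t0, +oo) and satisfying the ODE at every t > t0 outside a
   locally finite exceptional set (the discontinuity times of the
   piecewise-continuous right-hand side). *)
Definition is_solution (Ft Fv : R -> 'cV[R]_n -> 'cV[R]_n -> 'cV[R]_n)
    (t0 : R) (th vth : R -> 'cV[R]_n) : Prop :=
  {within `[t0, +oo[, continuous th} /\
  {within `[t0, +oo[, continuous vth} /\
  exists D : set R,
    (forall a b : R, finite_set (D `&` `[a, b])) /\
    (forall t : R, t0 < t -> ~ D t ->
       is_derive t 1 th (Ft t (th t) (vth t)) /\
       is_derive t 1 vth (Fv t (th t) (vth t))).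

Definition UGES (Ft Fv : R -> 'cV[R]_n -> 'cV[R]_n -> 'cV[R]_n)
    (thstar : 'cV[R]_n) : Prop :=
  exists c alpha : R, 0 < c /\ 0 < alpha /\
    forall (t0 : R) (th vth : R -> 'cV[R]_n),
      0 <= t0 -> is_solution Ft Fv t0 th vth ->
      forall t : R, t0 <= t ->
        enorm2 (th t - thstar) (vth t - thstar)
        <= c * enorm2 (th t0 - thstar) (vth t0 - thstar)
             * expR (- alpha * (t - t0)).

Variables (phi : R -> 'cV[R]_n) (thstar : 'cV[R]_n) (N : nat) (tk : 'I_N -> R).

Definition ystar (t : R) : R := dotv (phi t) thstar.

Definition Nt (mu t : R) : R := 1 + mu * dotv (phi t) (phi t).

Definition Bterm (th : 'cV[R]_n) (mu : R) : 'cV[R]_n :=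
  \sum_(k < N) ((1 + mu * (enorm (phi (tk k))) ^+ 2)^-1
                 * (dotv (phi (tk k)) th - ystar (tk k))) *: phi (tk k).

Definition F1t (beta mu : R) (t : R) (th vth : 'cV[R]_n) : 'cV[R]_n :=
  - (beta * Nt mu t) *: (th - vth).
Definition F1v (gamma mu : R) (t : R) (th vth : 'cV[R]_n) : 'cV[R]_n :=
  - gamma *: ((dotv (phi t) th - ystar t) *: phi t + Nt mu t *: Bterm th mu).

Definition F2t (beta : R) (t : R) (th vth : 'cV[R]_n) : 'cV[R]_n :=
  - beta *: (th - vth).
Definition F2v (gamma mu : R) (t : R) (th vth : 'cV[R]_n) : 'cV[R]_n :=
  - gamma *: (((Nt mu t)^-1 * (dotv (phi t) th - ystar t)) *: phi t
           + Bterm th mu).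

Definition F3t (beta : R) (t : R) (th vth : 'cV[R]_n) : 'cV[R]_n :=
  - beta *: (th - vth).
Definition F3v (gamma mu : R) (t : R) (th vth : 'cV[R]_n) : 'cV[R]_n :=
  - gamma *: Bterm th mu.

End Defs.

From HB Require Import structures.
From mathcomp Require Import all_boot all_order all_algebra.
From mathcomp Require Import all_classical all_reals all_analysis.
From mathcomp Require Import ring lra.
Import Order.TTheory GRing.Theory Num.Theory.
Import numFieldNormedType.Exports.
Set Implicit Arguments. Unset Strict Implicit. Unset Printing Implicit Defensive.
Local Open Scope classical_set_scope.
Local Open Scope ring_scope.

(* Write e = theta - theta* and u = theta - vartheta. All three systems are of the
   form  theta' = - beta s u,  vartheta' = - gamma (k (w^T e) w + s B(e))  with
   s >= 1, k >= 0 and gamma k |w|^2 <= beta s / 2, where B(e) = sum_k c_k phi_k phi_k^T e.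
   For such a system the function
     V = |u|^2/2 - e^T u/2 + |e|^2/4 + gamma/(2 beta) sum_k c_k (phi_k^T e)^2
   is comparable to |theta - theta*|^2 + |vartheta - theta*|^2 and satisfies
     V' <= - beta/4 |u|^2 - gamma/2 sum_k c_k (phi_k^T e)^2.
   The rank condition bounds the last sum below by p |e|^2, so V' <= - alpha V, and a
   comparison argument on the pieces between the (locally finite) points where the
   equation may fail gives V(t) <= V(t0) e^(-alpha (t - t0)). *)

Lemma sum_mul_sqr_le (R : realFieldType) (I : finType) (a b : I -> R) :
  (\sum_i a i * b i) ^+ 2 <= (\sum_i a i ^+ 2) * (\sum_i b i ^+ 2).
Proof.
set A := \sum_i a i ^+ 2; set B := \sum_i b i ^+ 2; set C := \sum_i a i * b i.
have A_ge0 : 0 <= A by apply: sumr_ge0 => i _; exact: sqr_ge0.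
have disc_ge0 : 0 <= A * (A * B - C ^+ 2).
  have -> : A * (A * B - C ^+ 2) = \sum_i (A * b i - C * a i) ^+ 2.
    transitivity (\sum_i (A ^+ 2 * b i ^+ 2 - 2 * A * C * (a i * b i)
                          + C ^+ 2 * a i ^+ 2)).
      by rewrite big_split /= sumrB -!mulr_sumr -/A -/B -/C; ring.
    by apply: eq_bigr => i _; ring.
  by apply: sumr_ge0 => i _; exact: sqr_ge0.
have [A0|A_neq0] := eqVneq A 0.
  have a0 i : a i = 0.
    apply/eqP; rewrite -sqrf_eq0; apply/eqP/(psumr_eq0P _ A0) => // j _.
    exact: sqr_ge0.
  rewrite /C big1 ?expr0n /= => [|i _]; last by rewrite a0 mul0r.
  by rewrite mulr_ge0 // sumr_ge0 // => i _; exact: sqr_ge0.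
by rewrite -subr_ge0; move: disc_ge0; rewrite pmulr_rge0 // lt_def A_neq0.
Qed.

Section DotProduct.
Variables (R : realType) (n : nat).
Implicit Types (u v w : 'cV[R]_n).

Lemma dotvE u v : dotv u v = \sum_(i < n) u i 0 * v i 0.
Proof. by rewrite /dotv mxE; apply: eq_bigr => i _; rewrite mxE. Qed.

Lemma dotvC u v : dotv u v = dotv v u.
Proof. by rewrite !dotvE; apply: eq_bigr => i _; rewrite mulrC. Qed.

Lemma dotvDr u v w : dotv u (v + w) = dotv u v + dotv u w.
Proof. by rewrite !dotvE -big_split; apply: eq_bigr => i _; rewrite mxE mulrDr. Qed.

Lemma dotvDl u v w : dotv (v + w) u = dotv v u + dotv w u.
Proof. by rewrite ![dotv _ u]dotvC dotvDr. Qed.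

Lemma dotvZr a u v : dotv u (a *: v) = a * dotv u v.
Proof. by rewrite !dotvE mulr_sumr; apply: eq_bigr => i _; rewrite mxE mulrCA. Qed.

Lemma dotvZl a u v : dotv (a *: v) u = a * dotv v u.
Proof. by rewrite ![dotv _ u]dotvC dotvZr. Qed.

Lemma dotvNr u v : dotv u (- v) = - dotv u v.
Proof. by rewrite -scaleN1r dotvZr mulN1r. Qed.

Lemma dotvNl u v : dotv (- v) u = - dotv v u.
Proof. by rewrite -scaleN1r dotvZl mulN1r. Qed.

Lemma dotvBr u v w : dotv u (v - w) = dotv u v - dotv u w.
Proof. by rewrite dotvDr dotvNr. Qed.

Lemma dotvBl u v w : dotv (v - w) u = dotv v u - dotv w u.
Proof. by rewrite dotvDl dotvNl. Qed.

Lemma dotv0l u : dotv 0 u = 0.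
Proof. by rewrite -(scale0r (0 : 'cV[R]_n)) dotvZl mul0r. Qed.

Lemma dotv_sumr (m : nat) (a : 'I_m -> R) (f : 'I_m -> 'cV[R]_n) u :
  dotv u (\sum_(k < m) a k *: f k) = \sum_(k < m) a k * dotv u (f k).
Proof.
elim/big_rec2: _ => [|k y1 y2 _ <-]; last by rewrite dotvDr dotvZr.
by rewrite dotvC dotv0l.
Qed.

Lemma dotvv_ge0 u : 0 <= dotv u u.
Proof. by rewrite dotvE sumr_ge0 // => i _; rewrite -expr2 sqr_ge0. Qed.

Lemma dotv_sqr_le u v : dotv u v ^+ 2 <= dotv u u * dotv v v.
Proof.
have := sum_mul_sqr_le (fun i => u i 0) (fun i => v i 0).
by rewrite !dotvE; congr (_ <= _ * _); apply: eq_bigr => i _; rewrite expr2.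
Qed.

Lemma dotv_le_AMGM u v r : 0 < r -> 2 * dotv u v <= r * dotv u u + r^-1 * dotv v v.
Proof.
move=> r_gt0; have := dotvv_ge0 (r *: u - v).
rewrite !(dotvBl, dotvBr, dotvZl, dotvZr) (dotvC v u) => sq_ge0.
rewrite -subr_ge0 -(pmulr_rge0 _ r_gt0).
have -> : r * (r * dotv u u + r^-1 * dotv v v - 2 * dotv u v)
   = r * (r * dotv u u) - r * dotv u v - (r * dotv u v - (r * r^-1) * dotv v v).
  by ring.
by rewrite divff ?gt_eqF // mul1r.
Qed.

Lemma enorm2_sqr u v : enorm2 u v ^+ 2 = dotv u u + dotv v v.
Proof.
rewrite /enorm2 sqr_sqrtr ?dotvE.
  by congr (_ + _); apply: eq_bigr => i _; rewrite expr2.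
by rewrite addr_ge0 // sumr_ge0 // => i _; exact: sqr_ge0.
Qed.

End DotProduct.

Section Derivatives.
Variables (R : realType) (n : nat).

Lemma is_derive_sum_fun m (h : 'I_m -> R -> R) (dh : 'I_m -> R) (t : R) :
  (forall k, is_derive t 1 (h k) (dh k)) ->
  is_derive t 1 (fun x => \sum_(k < m) h k x) (\sum_(k < m) dh k).
Proof.
move=> hk; have := is_derive_sum hk.
by rewrite (_ : \sum_(k < m) h k = fun x => \sum_(k < m) h k x) // funeqE => x;
  rewrite fct_sumE.
Qed.

Lemma is_derive_expR_affine (a c t : R) :
  is_derive t 1 (fun x => expR (a * (x - c))) (a * expR (a * (t - c))).
Proof.
have lin : is_derive t 1 (fun x : R => a * (x - c)) a.
  by apply: is_derive_eq; rewrite subr0 scaler1.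
by rewrite mulrC; exact: (is_derive1_comp (f := expR) _ lin).
Qed.

Lemma is_derive_entry (f : R -> 'cV[R]_n) (df : 'cV[R]_n) (t : R) i j :
  is_derive t 1 f df -> is_derive t 1 (fun x => f x i j) (df i j).
Proof.
move=> [f_der <-]; apply: DeriveDef; first exact: (derivable_mxP f t 1).1 f_der i j.
by rewrite (derive_mx f_der) mxE.
Qed.

Lemma is_derive_dotv (f g : R -> 'cV[R]_n) (df dg : 'cV[R]_n) (t : R) :
  is_derive t 1 f df -> is_derive t 1 g dg ->
  is_derive t 1 (fun x => dotv (f x) (g x)) (dotv df (g t) + dotv (f t) dg).
Proof.
move=> f_der g_der.
rewrite (_ : (fun x => dotv (f x) (g x)) = fun x => \sum_(i < n) f x i 0 * g x i 0);
  last by rewrite funeqE => x; rewrite dotvE.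
apply: is_derive_eq; first apply: is_derive_sum_fun => i.
  exact: is_deriveM (is_derive_entry i 0 f_der) (is_derive_entry i 0 g_der).
rewrite !dotvE -big_split; apply: eq_bigr => i _ /=.
by rewrite addrC [_ *: df i 0]mulrC.
Qed.

Lemma is_derive_dotvl (c : 'cV[R]_n) (f : R -> 'cV[R]_n) (df : 'cV[R]_n) (t : R) :
  is_derive t 1 f df -> is_derive t 1 (fun x => dotv c (f x)) (dotv c df).
Proof.
by move=> f_der; have := is_derive_dotv (is_derive_cst c t 1) f_der; rewrite dotv0l add0r.
Qed.

End Derivatives.

Section Comparison.
Variable R : realType.

Lemma le_piecewise_derive_le0 (f : R -> R) (S : seq R) (a b : R) : a <= b ->
  {within `[a, b], continuous f} ->
  (forall x, a < x -> x < b -> x \notin S ->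
     exists2 df, is_derive x 1 f df & df <= 0) ->
  f b <= f a.
Proof.
elim: S a b => [|s S IH] a b; rewrite le_eqVlt => /orP[/eqP<- //|ab] f_cont f_der.
  have f_der' x : x \in `]a, b[%R -> is_derive x 1 f ('D_1 f x).
    rewrite in_itv /= => /andP[ax xb].
    by have [df df_der _] := f_der x ax xb isT; rewrite derive_val.
  have [c /[!in_itv] /andP[ac cb] E] := MVT ab f_der' f_cont.
  rewrite -subr_le0 E.
  have [df df_der df_le0] := f_der c ac cb isT.
  by rewrite derive_val mulr_le0_ge0 // subr_ge0 ltW.
have sub_ab c d : a <= c -> d <= b -> `[c, d] `<=` `[a, b].
  by move=> ac db; apply: subset_itv; rewrite bnd_simp.
have [/andP[a_s sb]|s_out] := boolP ((a < s) && (s < b)).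
  apply: (@le_trans _ _ (f s)); apply: IH.
  - exact: ltW.
  - by apply: continuous_subspaceW f_cont; apply: sub_ab => //; exact: ltW.
  - move=> x sx xb xS; apply: f_der => //; first exact: lt_trans sx.
    by rewrite in_cons negb_or xS andbT gt_eqF.
  - exact: ltW.
  - by apply: continuous_subspaceW f_cont; apply: sub_ab => //; exact: ltW.
  - move=> x ax xs xS; apply: f_der => //; first exact: lt_trans xs _.
    by rewrite in_cons negb_or xS andbT lt_eqF.
apply: IH (ltW ab) f_cont _ => x ax xb xS; apply: f_der => //.
rewrite in_cons negb_or xS andbT; apply: contraNneq s_out => <-.
by rewrite ax xb.
Qed.

(* The proof shows that [V t * expR (al * (t - t0))] is nonincreasing. *)
Lemma le_expR_decay (V : R -> R) (al t0 : R) (D : set R) :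
  (forall a b, finite_set (D `&` `[a, b])) ->
  {within `[t0, +oo[, continuous V} ->
  (forall t, t0 < t -> ~ D t ->
     exists2 dV, is_derive t 1 V dV & dV <= - al * V t) ->
  forall t, t0 <= t -> V t <= V t0 * expR (- al * (t - t0)).
Proof.
move=> D_fin V_cont V_der t t0t.
have [S DS] := (finite_seqP _).1 (D_fin t0 t).
pose W x := V x * expR (al * (x - t0)).
have : W t <= W t0.
  apply: (le_piecewise_derive_le0 (S := S)) => //.
    move=> x; apply: cvgM.
      by apply: (continuous_subspaceW _ V_cont) => y /=;
        rewrite !in_itv /= => /andP[-> _].
    apply: continuous_subspaceT => y; apply: continuous_comp; last first.
      exact: continuous_expR.
    by apply: cvgM; [exact: cvg_cst | apply: cvgB; [exact: cvg_id | exact: cvg_cst]].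
  move=> x t0x xt xS.
  have notDx : ~ D x.
    move=> Dx; move/negP: xS; apply.
    have : (D `&` `[t0, t]) x by split => //=; rewrite in_itv /= !ltW.
    by rewrite DS.
  have [dV dV_der dV_le] := V_der x t0x notDx.
  exists (V x * (al * expR (al * (x - t0))) + expR (al * (x - t0)) * dV).
    exact: is_deriveM dV_der (is_derive_expR_affine al t0 x).
  have := ler_wpM2l (ltW (expR_gt0 (al * (x - t0)))) dV_le.
  lra.
rewrite /W subrr mulr0 expR0 mulr1 => W_le.
rewrite -(ler_pM2r (expR_gt0 (al * (t - t0)))) -mulrA -expRD.
by rewrite mulNr addNr expR0 mulr1.
Qed.

End Comparison.

Lemma cvg_dotv (R : realType) (n : nat) {T : Type} (F : set_system T) {FF : Filter F}
    (f g : T -> 'cV[R]_n) (a b : 'cV[R]_n) :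
  f @ F --> a -> g @ F --> b -> (fun x => dotv (f x) (g x)) @ F --> dotv a b.
Proof.
move=> fa gb; under eq_cvg do rewrite dotvE; rewrite dotvE.
apply: cvg_big => [|i _]; first exact: add_continuous.
have coord_cvg (h : T -> 'cV[R]_n) (c : 'cV[R]_n) :
    h @ F --> c -> (fun x => h x i 0) @ F --> c i 0.
  by move=> hc; exact: (continuous_cvg _ (@coord_continuous R n 1 i 0 c) hc).
by apply: cvgM; exact: coord_cvg.
Qed.

Section Lyapunov.
Variables (R : realType) (n : nat) (phi : R -> 'cV[R]_n) (N : nat) (tk : 'I_N -> R).
Variable mu : R.
Hypothesis mu_ge0 : 0 <= mu.

Definition pe_weight (k : 'I_N) : R := (1 + mu * enorm (phi (tk k)) ^+ 2)^-1.

Definition pe_grad (e : 'cV[R]_n) : 'cV[R]_n :=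
  \sum_(k < N) (pe_weight k * dotv (phi (tk k)) e) *: phi (tk k).

Definition pe_form (e : 'cV[R]_n) : R :=
  \sum_(k < N) pe_weight k * dotv (phi (tk k)) e ^+ 2.

Definition pe_trace : R := \sum_(k < N) pe_weight k * dotv (phi (tk k)) (phi (tk k)).

Lemma Bterm_pe_grad thstar th : Bterm phi thstar tk th mu = pe_grad (th - thstar).
Proof. by apply: eq_bigr => k _; rewrite dotvBr. Qed.

Lemma dotv_pe_grad x e :
  dotv x (pe_grad e) = \sum_(k < N) pe_weight k * (dotv (phi (tk k)) e * dotv (phi (tk k)) x).
Proof. by rewrite dotv_sumr; apply: eq_bigr => k _; rewrite mulrA (dotvC x). Qed.

Lemma pe_form_pe_grad e : pe_form e = dotv e (pe_grad e).
Proof. by rewrite dotv_pe_grad; apply: eq_bigr => k _; rewrite expr2. Qed.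

Lemma pe_weight_gt0 k : 0 < pe_weight k.
Proof. by rewrite invr_gt0 ltr_pwDl // mulr_ge0 // sqr_ge0. Qed.

Lemma pe_form_ge0 e : 0 <= pe_form e.
Proof. by apply: sumr_ge0 => k _; rewrite mulr_ge0 ?sqr_ge0 // ltW ?pe_weight_gt0. Qed.

Lemma pe_trace_ge0 : 0 <= pe_trace.
Proof. by apply: sumr_ge0 => k _; rewrite mulr_ge0 ?dotvv_ge0 // ltW ?pe_weight_gt0. Qed.

Lemma pe_form_le e : pe_form e <= pe_trace * dotv e e.
Proof.
rewrite /pe_form /pe_trace mulr_suml; apply: ler_sum => k _; rewrite -mulrA.
by rewrite ler_wpM2l ?dotv_sqr_le // ltW ?pe_weight_gt0.
Qed.

(* Persistence of excitation: a right inverse B of the rank-n sample matrix writes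
   each coordinate of e as a combination of the samples phi(t_k)^T e. *)
Lemma pe_form_ge : \rank (\matrix_(i < n, k < N) phi (tk k) i 0) = n ->
  exists2 p, 0 < p & forall e, p * dotv e e <= pe_form e.
Proof.
move=> rank_n.
set M := \matrix_(i < n, k < N) phi (tk k) i 0.
have /row_freeP [B MB] : row_free M by rewrite /row_free rank_n.
set F := \sum_(i < n) \sum_(k < N) B k i ^+ 2.
set C := 1 + mu * \sum_(k < N) enorm (phi (tk k)) ^+ 2.
have F_ge0 : 0 <= F by do 2!apply: sumr_ge0 => ? _; exact: sqr_ge0.
have C_gt0 : 0 < C by rewrite ltr_pwDl // mulr_ge0 // sumr_ge0 // => k _; exact: sqr_ge0.
have F1_gt0 : 0 < F + 1 by apply: ltr_wpDl F_ge0 ltr01.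
exists (C^-1 / (F + 1)) => [|e]; first by rewrite divr_gt0 ?invr_gt0.
pose v k := dotv (phi (tk k)) e.
have e_coord i : e i 0 = \sum_(k < N) v k * B k i.
  have : (e^T *m (M *m B)) 0 i = e i 0 by rewrite MB mulmx1 mxE.
  rewrite mulmxA mxE => <-; apply: eq_bigr => k _; congr (_ * _).
  by rewrite mxE /v dotvE; apply: eq_bigr => j _; rewrite !mxE mulrC.
set S := \sum_(k < N) v k ^+ 2.
have ee_le : dotv e e <= F * S.
  rewrite dotvE /F mulr_suml; apply: ler_sum => i _.
  by rewrite -expr2 e_coord mulrC; exact: sum_mul_sqr_le.
have S_le : C^-1 * S <= pe_form e.
  rewrite /pe_form /S mulr_sumr; apply: ler_sum => k _.
  rewrite /v expr2; apply: ler_wpM2r; first by rewrite -expr2 sqr_ge0.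
  have pos_k : 0 < 1 + mu * enorm (phi (tk k)) ^+ 2.
    by rewrite ltr_pwDl // mulr_ge0 // sqr_ge0.
  rewrite /pe_weight lef_pV2 ?posrE // lerD2l ler_wpM2l // (bigD1 k) //= lerDl.
  by apply: sumr_ge0 => j _; exact: sqr_ge0.
apply: le_trans S_le; rewrite -mulrA ler_wpM2l ?invr_ge0 ?(ltW C_gt0) //.
rewrite ler_pdivrMl //; apply: le_trans ee_le _.
by rewrite mulrDl mul1r lerDl; apply: sumr_ge0 => k _; exact: sqr_ge0.
Qed.

(* Evaluated at e = theta - theta* and u = theta - vartheta. *)
Definition lyap (c : R) (e u : 'cV[R]_n) : R :=
  2^-1 * dotv u u - 2^-1 * dotv e u + 4^-1 * dotv e e + c * pe_form e.

Definition lyap_deriv (c : R) (e u de du : 'cV[R]_n) : R :=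
  dotv u du - 2^-1 * (dotv de u + dotv e du) + 2^-1 * dotv e de
  + 2 * c * dotv de (pe_grad e).

Lemma is_derive_pe_form (e : R -> 'cV[R]_n) (de : 'cV[R]_n) (t : R) :
  is_derive t 1 e de ->
  is_derive t 1 (fun x => pe_form (e x)) (2 * dotv de (pe_grad (e t))).
Proof.
move=> e_der.
rewrite (_ : (fun x => pe_form (e x)) = fun x => \sum_(k < N)
    pe_weight k * (dotv (phi (tk k)) (e x) * dotv (phi (tk k)) (e x))).
  apply: is_derive_eq.
    apply: is_derive_sum_fun => k; apply: is_deriveZ.
    exact: is_deriveM (is_derive_dotvl _ e_der) (is_derive_dotvl _ e_der).
  rewrite dotv_pe_grad mulr_sumr; apply: eq_bigr => k _.
  by rewrite /GRing.scale /=; ring.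
by rewrite funeqE => x; apply: eq_bigr => k _; rewrite expr2.
Qed.

Lemma is_derive_lyap c (e u : R -> 'cV[R]_n) (de du : 'cV[R]_n) (t : R) :
  is_derive t 1 e de -> is_derive t 1 u du ->
  is_derive t 1 (fun x => lyap c (e x) (u x)) (lyap_deriv c (e t) (u t) de du).
Proof.
move=> e_der u_der; apply: is_derive_eq.
  exact: is_deriveD (is_deriveD (is_deriveB (is_deriveZ _ (is_derive_dotv u_der u_der))
    (is_deriveZ _ (is_derive_dotv e_der u_der))) (is_deriveZ _ (is_derive_dotv e_der e_der)))
    (is_deriveZ c (is_derive_pe_form e_der)).
by rewrite /lyap_deriv (dotvC du) (dotvC de (e t)) /GRing.scale /=; field.
Qed.

Lemma lyap_deriv_flowE (beta gamma s k : R) (w e u : 'cV[R]_n) : beta != 0 ->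
  lyap_deriv (gamma / (2 * beta)) e u (- (beta * s) *: u)
    (- (beta * s) *: u - (- gamma *: ((k * dotv w e) *: w + s *: pe_grad e)))
  = - (beta * s / 2) * dotv u u
    + gamma * k * (dotv w e * dotv w u - dotv w e ^+ 2 / 2)
    - gamma * s / 2 * pe_form e.
Proof.
move=> beta_neq0; rewrite /lyap_deriv pe_form_pe_grad.
rewrite !(dotvDl, dotvDr, dotvBl, dotvBr, dotvZl, dotvZr, dotvNl, dotvNr).
by rewrite (dotvC u w) (dotvC e w); field.
Qed.

Lemma lyap_deriv_flow_le (beta gamma s k : R) (w e u : 'cV[R]_n) :
  0 < beta -> 0 < gamma -> 1 <= s -> 0 <= k -> gamma * k * dotv w w <= beta * s / 2 ->
  lyap_deriv (gamma / (2 * beta)) e u (- (beta * s) *: u)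
    (- (beta * s) *: u - (- gamma *: ((k * dotv w e) *: w + s *: pe_grad e)))
  <= - (beta / 4) * dotv u u - gamma / 2 * pe_form e.
Proof.
move=> beta_gt0 gamma_gt0 s_ge1 k_ge0 w_small.
rewrite lyap_deriv_flowE ?gt_eqF //.
set a := dotv w e; set b := dotv w u; set uu := dotv u u; set Q := pe_form e.
have uu_ge0 : 0 <= uu := dotvv_ge0 u.
have Q_ge0 : 0 <= Q := pe_form_ge0 e.
have gk_ge0 : 0 <= gamma * k by rewrite mulr_ge0 // ltW.
have cross_le : gamma * k * (a * b - a ^+ 2 / 2) <= gamma * k * (b ^+ 2 / 2).
  rewrite ler_wpM2l // -subr_ge0.
  have -> : b ^+ 2 / 2 - (a * b - a ^+ 2 / 2) = (a - b) ^+ 2 / 2 by field.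
  by rewrite mulr_ge0 ?sqr_ge0.
have b_le : gamma * k * b ^+ 2 <= beta * s / 2 * uu.
  apply: le_trans (ler_wpM2r uu_ge0 w_small).
  by rewrite -[gamma * k * _ * uu]mulrA ler_wpM2l // dotv_sqr_le.
have s_uu : beta * uu <= beta * s * uu.
  by rewrite -mulrA ler_wpM2l ?(ltW beta_gt0) // ler_peMl.
have s_Q : gamma * Q <= gamma * s * Q.
  by rewrite -mulrA ler_wpM2l ?(ltW gamma_gt0) // ler_peMl.
lra.
Qed.

Lemma lyap_ge c (e z : 'cV[R]_n) : 0 <= c ->
  (dotv e e + dotv z z) / 12 <= lyap c e (e - z).
Proof.
move=> c_ge0; rewrite /lyap !(dotvBl, dotvBr) (dotvC z e).
have cQ_ge0 : 0 <= c * pe_form e by rewrite mulr_ge0 // pe_form_ge0.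
have := dotv_le_AMGM e z (r := 2 / 3) ltac:(lra); rewrite invf_div.
have := dotvv_ge0 e; have := dotvv_ge0 z.
lra.
Qed.

Lemma lyap_le c (e z : 'cV[R]_n) : 0 <= c ->
  lyap c e (e - z) <= (1 + c * pe_trace) * (dotv e e + dotv z z).
Proof.
move=> c_ge0; rewrite /lyap !(dotvBl, dotvBr) (dotvC z e).
have cQ_le : c * pe_form e <= c * pe_trace * dotv e e.
  by rewrite -mulrA ler_wpM2l // pe_form_le.
have cKz_ge0 : 0 <= c * pe_trace * dotv z z.
  by rewrite !mulr_ge0 ?dotvv_ge0 ?pe_trace_ge0.
have := dotvv_ge0 (e + z); rewrite !(dotvDl, dotvDr) (dotvC z e).
have := dotvv_ge0 e; have := dotvv_ge0 z.
lra.
Qed.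

Lemma dissipation_le (beta gamma p m : R) (e z : 'cV[R]_n) :
  0 < gamma -> 0 <= m -> m <= beta / 4 -> m <= gamma * p / 2 ->
  p * dotv e e <= pe_form e ->
  - (beta / 4) * dotv (e - z) (e - z) - gamma / 2 * pe_form e
  <= - (m / 3) * (dotv e e + dotv z z).
Proof.
move=> gamma_gt0 m_ge0 m_le_beta m_le_gamma pe_ge.
have uuE : dotv (e - z) (e - z) = dotv e e - 2 * dotv e z + dotv z z.
  by rewrite !(dotvBl, dotvBr) (dotvC z e); ring.
have := dotv_le_AMGM e z (r := 3 / 2) ltac:(lra); rewrite invf_div => amgm.
have uu_ge0 := dotvv_ge0 (e - z); have ee_ge0 := dotvv_ge0 e.
have f1 : 0 <= (beta / 4 - m) * dotv (e - z) (e - z) by rewrite mulr_ge0 // subr_ge0.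
have f2 : 0 <= (gamma * p / 2 - m) * dotv e e by rewrite mulr_ge0 // subr_ge0.
have f3 : gamma * p * dotv e e <= gamma * pe_form e.
  by rewrite -mulrA ler_wpM2l // ltW.
have f4 : 0 <= m * (3 * (dotv e e + dotv (e - z) (e - z)) - (dotv e e + dotv z z)).
  by rewrite mulr_ge0 // uuE; lra.
lra.
Qed.

Lemma cvg_lyap c {T : Type} (F : set_system T) {FF : Filter F}
    (e u : T -> 'cV[R]_n) (a b : 'cV[R]_n) :
  e @ F --> a -> u @ F --> b -> (fun x => lyap c (e x) (u x)) @ F --> lyap c a b.
Proof.
move=> ea ub; rewrite /lyap /pe_form.
apply: cvgD; first apply: cvgD; first apply: cvgB.
- exact: cvgMl_tmp (cvg_dotv ub ub).
- exact: cvgMl_tmp (cvg_dotv ea ub).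
- exact: cvgMl_tmp (cvg_dotv ea ea).
apply: cvgMl_tmp; apply: cvg_big => [|k _]; first exact: add_continuous.
by apply: cvgMl_tmp; rewrite expr2; apply: cvgM; apply: cvg_dotv => //; exact: cvg_cst.
Qed.

End Lyapunov.

Lemma le_sqrt_expR (R : realType) (a b K al x : R) : 0 <= a -> 0 <= b -> 0 <= K ->
  a ^+ 2 <= K * b ^+ 2 * expR (- al * x) ->
  a <= Num.sqrt K * b * expR (- (al / 2) * x).
Proof.
move=> a_ge0 b_ge0 K_ge0 sq_le.
rewrite -ler_sqr ?nnegrE ?mulr_ge0 ?sqrtr_ge0 ?expR_ge0 //.
rewrite !exprMn sqr_sqrtr //.
suff -> : expR (- (al / 2) * x) ^+ 2 = expR (- al * x) by [].
by rewrite expr2 -expRD; congr expR; field.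
Qed.

Section Stability.
Variables (R : realType) (n : nat) (phi : R -> 'cV[R]_n) (thstar : 'cV[R]_n).
Variables (N : nat) (tk : 'I_N -> R) (beta gamma mu : R).
Hypotheses (beta_gt0 : 0 < beta) (gamma_gt0 : 0 < gamma) (mu_ge0 : 0 <= mu).
Hypothesis rank_n : \rank (\matrix_(i < n, k < N) phi (tk k) i 0) = n.
Variables (Ft Fv : R -> 'cV[R]_n -> 'cV[R]_n -> 'cV[R]_n).

(* The three systems are instances of this scheme, with (s, k, w) equal to
   (N_t, 1, phi t), (1, N_t^-1, phi t) and (1, 0, 0) respectively. *)
Hypothesis flow_scheme : forall t th vth, exists s k w,
  [/\ 1 <= s, 0 <= k, gamma * k * dotv w w <= beta * s / 2,
      Ft t th vth = - (beta * s) *: (th - vth) &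
      Fv t th vth = - gamma *: ((k * dotv w (th - thstar)) *: w
                                + s *: pe_grad phi tk mu (th - thstar))].

Let c := gamma / (2 * beta).
Let V (th vth : R -> 'cV[R]_n) (t : R) := lyap phi tk mu c (th t - thstar) (th t - vth t).

Lemma lyap_solution_decay (al : R) (t0 : R) (th vth : R -> 'cV[R]_n) :
  (forall e z, - (beta / 4) * dotv (e - z) (e - z) - gamma / 2 * pe_form phi tk mu e
               <= - al * lyap phi tk mu c e (e - z)) ->
  is_solution Ft Fv t0 th vth ->
  forall t, t0 <= t -> V th vth t <= V th vth t0 * expR (- al * (t - t0)).
Proof.
move=> dissip [th_cont [vth_cont [D [D_fin sol]]]].
apply: (le_expR_decay D_fin) => [x|x t0x notDx].
  by apply: cvg_lyap; apply: cvgB;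
    [exact: th_cont | exact: cvg_cst | exact: th_cont | exact: vth_cont].
have [th_der vth_der] := sol x t0x notDx.
have [s [k [w [s_ge1 k_ge0 w_small Ft_eq Fv_eq]]]] := flow_scheme x (th x) (vth x).
have u_eq : th x - vth x = (th x - thstar) - (vth x - thstar).
  by rewrite opprB addrA subrK.
eexists; first exact: is_derive_lyap (is_deriveB th_der (is_derive_cst _ _ _))
                                     (is_deriveB th_der vth_der).
rewrite /= subr0 Ft_eq Fv_eq.
apply: le_trans (lyap_deriv_flow_le phi tk mu_ge0 (th x - thstar) (th x - vth x)
                   beta_gt0 gamma_gt0 s_ge1 k_ge0 w_small) _.
by rewrite /V u_eq; exact: dissip.
Qed.

Lemma UGES_of_flow_scheme : UGES Ft Fv thstar.
Proof.
have [p p_gt0 pe_ge] := pe_form_ge mu_ge0 rank_n.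
set m := Num.min (beta / 4) (gamma * p / 2).
have m_gt0 : 0 < m by rewrite lt_min !divr_gt0 ?mulr_gt0.
have m_le_beta : m <= beta / 4 by rewrite ge_min lexx.
have m_le_gamma : m <= gamma * p / 2 by rewrite ge_min lexx orbT.
have c_ge0 : 0 <= c by rewrite divr_ge0 ?mulr_ge0 ?ltW.
set G := 1 + c * pe_trace phi tk mu.
have G_ge1 : 1 <= G by rewrite lerDl mulr_ge0 ?pe_trace_ge0.
have G_gt0 : 0 < G := lt_le_trans ltr01 G_ge1.
set al := m / 3 / G.
have al_gt0 : 0 < al by rewrite !divr_gt0.
have dissip e z : - (beta / 4) * dotv (e - z) (e - z) - gamma / 2 * pe_form phi tk mu e
                  <= - al * lyap phi tk mu c e (e - z).
  apply: le_trans (dissipation_le z gamma_gt0 (ltW m_gt0) m_le_beta m_le_gamma (pe_ge e)) _.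
  have := ler_wpM2l (ltW al_gt0) (lyap_le phi tk mu_ge0 e z c_ge0).
  by rewrite mulrA (divfK (lt0r_neq0 G_gt0)) -/G; lra.
exists (Num.sqrt (12 * G)), (al / 2); split; first by rewrite sqrtr_gt0; lra.
split; first by lra.
move=> t0 th vth _ sol t t0t.
apply: le_sqrt_expR; [exact: sqrtr_ge0 | exact: sqrtr_ge0 | lra | rewrite !enorm2_sqr].
have decay := lyap_solution_decay dissip sol t0t.
have sub_eq y : th y - vth y = (th y - thstar) - (vth y - thstar).
  by rewrite opprB addrA subrK.
rewrite /V !sub_eq in decay.
have := lyap_ge phi tk mu_ge0 (th t - thstar) (vth t - thstar) c_ge0.
have := ler_wpM2r (expR_ge0 (- al * (t - t0)))
          (lyap_le phi tk mu_ge0 (th t0 - thstar) (vth t0 - thstar) c_ge0).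
rewrite -/G; lra.
Qed.

End Stability.

Lemma Nt_ge1 (R : realType) (n : nat) (phi : R -> 'cV[R]_n) (mu t : R) :
  0 <= mu -> 1 <= Nt phi mu t.
Proof. by move=> mu_ge0; rewrite lerDl mulr_ge0 ?dotvv_ge0. Qed.

Lemma gain_le_Nt (R : realType) (n : nat) (phi : R -> 'cV[R]_n) (beta gamma mu t : R) :
  0 < beta -> 0 < mu -> 2 * gamma / mu <= beta ->
  gamma * dotv (phi t) (phi t) <= beta * Nt phi mu t / 2.
Proof.
move=> beta_gt0 mu_gt0; rewrite ler_pdivrMr // => gain.
have := ler_wpM2r (dotvv_ge0 (phi t)) gain; rewrite /Nt.
have := dotvv_ge0 (phi t); nra.
Qed.

Theorem mainTheorem8 (R : realType) (n : nat) (phi : R -> 'cV[R]_n)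
    (thstar : 'cV[R]_n) (N : nat) (tk : 'I_N -> R) :
  piecewise_continuous phi ->
  bounded_on_nonneg phi ->
  (forall k, 0 <= tk k) ->
  \rank (\matrix_(i < n, k < N) phi (tk k) i 0) = n ->
  (* Theorem 3, system (i) *)
  (forall beta gamma mu : R, 0 < beta -> 0 < gamma -> 0 < mu ->
     2 * gamma / mu <= beta ->
     UGES (F1t phi beta mu) (F1v phi thstar tk gamma mu) thstar) /\
  (* Theorem 4, system (ii) *)
  (forall beta gamma mu : R, 0 < beta -> 0 < gamma -> 0 < mu ->
     2 * gamma / mu <= beta ->
     UGES (F2t (n:=n) beta) (F2v phi thstar tk gamma mu) thstar) /\
  (* Theorem 5, system (iii) *)
  (forall beta gamma mu : R, 0 < beta -> 0 < gamma -> 0 <= mu ->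
     UGES (F3t (n:=n) beta) (F3v phi thstar tk gamma mu) thstar).
Proof.
move=> _ _ _ rank_n; split; [|split] => beta gamma mu beta_gt0 gamma_gt0 hmu.
- move=> gain; apply: (UGES_of_flow_scheme beta_gt0 gamma_gt0 (ltW hmu) rank_n).
  move=> t th vth; exists (Nt phi mu t), 1, (phi t); split => //.
  + exact: Nt_ge1 (ltW hmu).
  + by rewrite mulr1; exact: gain_le_Nt.
  + by rewrite /F1v Bterm_pe_grad /ystar dotvBr mul1r.
- move=> gain; apply: (UGES_of_flow_scheme beta_gt0 gamma_gt0 (ltW hmu) rank_n).
  move=> t th vth; have Nt_gt0 := lt_le_trans ltr01 (Nt_ge1 phi t (ltW hmu)).
  exists 1, (Nt phi mu t)^-1, (phi t); split.
  + exact: lexx.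
  + by rewrite invr_ge0 ltW.
  + by rewrite mulr1 mulrAC ler_pdivrMr // mulrAC; exact: gain_le_Nt.
  + by rewrite /F2t mulr1.
  + by rewrite /F2v Bterm_pe_grad /ystar dotvBr scale1r.
- apply: (UGES_of_flow_scheme beta_gt0 gamma_gt0 hmu rank_n).
  move=> t th vth; exists 1, 0, 0; split.
  + exact: lexx.
  + exact: lexx.
  + by rewrite mulr0 mul0r mulr1 divr_ge0 ?ltW.
  + by rewrite /F3t mulr1.
  + by rewrite /F3v Bterm_pe_grad mul0r scale0r add0r scale1r.
Qed.
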